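(* Let $T$ be a tree with positive edge weights rooted at the homebase $r$, in which no vertex other than $r$ has exactly one child, and let $q\ge 0$. Compute labels $\Lambda_v=(\Lambda_v.k,\Lambda_v.u_l,\Lambda_v.u_c)$ for all $v$ recursively from the leaves up: for a leaf $v$, $\Lambda_v=(1,v,\mathrm{null})$; for a non-leaf $v$, with $d_r=d(r,v)+q$, $\Lambda_v.k=\max\{1,\sum_{u\in c(v)}(\Lambda_u.k-\mathbb{1}[\Lambda_u.k=1\text{ and }d(v,\Lambda_u.u_l)\le d_r])\}$, $\Lambda_v.u_c$ is a child $u$ of $v$ maximizing $d(v,\Lambda_u.u_l)$, and $\Lambda_v.u_l=\Lambda_{\Lambda_v.u_c}.u_l$. Then build the strategy $\mathcal{S}$ (procedure CostExpl) recursively: first invoke $\Lambda_r.k$ agents at $r$; at a non-leaf vertex $v$ (with agents present at $v$), order its children as $c_1,\dots,c_l$ with $c_l=\Lambda_v.u_c$ (the others in arbitrary order), and for $i=1,\dots,l$: move $\Lambda_{c_i}.k$ agents from $v$ along $(v,c_i)$, apply the construction recursively at $c_i$, and then, if $c_i\ne\Lambda_v.u_c$ and $d(v,\Lambda_{c_i}.u_l)\le d(r,v)+q$, send the agent located at $\Lambda_{c_i}.u_l$ back to $v$. Then $\mathcal{S}$ explores $T$ and is cost-optimal.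
   Context: Exploration model: given a connected graph with positive edge weights, a homebase vertex, and invoking cost $q\ge 0$, a strategy is a sequence of moves, each either invoking a new agent (appearing at the homebase) or an agent traversing an edge incident to its current vertex. A vertex is explored when first visited; the strategy explores the graph when every vertex has been visited by some agent (agents need not return). With $k$ agents, agent $i$ traversing total distance $d_i$ (weights counted with multiplicity), the cost is $kq+\sum_i d_i$; a strategy is cost-optimal if it explores the graph with minimum cost (off-line setting). For the rooted tree: $c(v)$ is the set of children of $v$, a leaf is a non-root vertex with no children, and $d(\cdot,\cdot)$ is weighted distance. *)

From mathcomp Require Import all_boot all_order all_algebra.
Set Implicit Arguments. Unset Strict Implicit. Unset Printing Implicit Defensive.
Import Order.TTheory GRing.Theory Num.Theory.
Local Open Scope ring_scope.

(* A rooted weighted tree on the finite vertex type V: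
   r is the root (homebase), par v is the parent of v (par r = r),
   every vertex reaches r by iterating par, and w v (v <> r) is the
   positive weight of the edge {v, par v}. *)
Section Tree.
Variables (R : realFieldType) (V : finType) (r : V) (par : V -> V) (w : V -> R).

Definition is_rooted_tree : Prop :=
  par r = r /\ (forall v : V, iter #|V| par v = r).

Definition children (v : V) : seq V :=
  [seq u <- enum V | (u != r) && (par u == v)].

Definition is_leaf (v : V) : bool := (v != r) && (children v == [::]).

Definition adj (x y : V) : bool :=
  ((x != r) && (par x == y)) || ((y != r) && (par y == x)).

Definition ew (x y : V) : R :=
  if (x != r) && (par x == y) then w x else w y.

Fixpoint depth_aux (n : nat) (v : V) : R :=
  if n is n'.+1 then (if v == r then 0 else w v + depth_aux n' (par v)) else 0.
Definition depth (v : V) : R := depth_aux #|V| v.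

Definition is_anc (y x : V) : bool := [exists n : 'I_#|V|.+1, iter n par x == y].

(* weighted tree distance: d(x,y) = d(r,x) + d(r,y) - 2 d(r, lca(x,y)) *)
Definition dist (x y : V) : R :=
  depth x + depth y
  - 2 * \big[Num.max/0]_(z | is_anc z x && is_anc z y) depth z.

Inductive move : Type :=
| Invoke
| Step of nat & V.

Variable q : R.

(* state: positions of agents (agent i = i-th invoked), visited set, cost so far *)
Definition state := (seq V * {set V} * R)%type.

Definition step (s : state) (m : move) : option state :=
  let: (pos, vis, c) := s in
  match m with
  | Invoke => Some (rcons pos r, r |: vis, c + q)
  | Step i y =>
      if (i < size pos)%N && adj (nth r pos i) y
      then Some (set_nth r pos i y, y |: vis, c + ew (nth r pos i) y)
      else None
  end.

Definition exec (S : seq move) : option state :=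
  foldl (fun o m => if o is Some s then step s m else None)
        (Some ([::], set0, 0)) S.

Definition explores (S : seq move) : Prop :=
  exists pos c, exec S = Some (pos, [set: V], c).

Definition cost (S : seq move) : R :=
  if exec S is Some (_, _, c) then c else 0.

Definition cost_optimal (S : seq move) : Prop :=
  explores S /\ forall S', explores S' -> cost S <= cost S'.

Definition is_labeling (K : V -> nat) (UL : V -> V) (UC : V -> option V) : Prop :=
  forall v : V,
    if is_leaf v then [/\ K v = 1%N, UL v = v & UC v = None]
    else
      K v = maxn 1 (\sum_(u <- children v)
               (K u - ((K u == 1%N) && (dist v (UL u) <= dist r v + q)%R))%N)
      /\ (if children v is [::] then UC v = None else
          exists2 u, u \in children v &
            [/\ UC v = Some u,
                (forall u', u' \in children v -> dist v (UL u') <= dist v (UL u))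
              & UL v = UL u]).

Variables (K : V -> nat) (UL : V -> V) (UC : V -> option V).

Fixpoint up_moves (n : nat) (a : nat) (x v : V) : seq move :=
  if n is n'.+1 then
    (if x == v then [::] else Step a (par x) :: up_moves n' a (par x) v)
  else [::].

(* CostExpl as a relation (all "arbitrary" choices are nondeterministic):
   cost_expl v A S F : starting with the agents A all at v, procedure
   CostExpl at v produces the moves S, and F lists (agent, final vertex)
   for the agents of A.
   expl_children v cs avail S F : processing the children list cs at v,
   with agents avail currently at v. *)
Inductive cost_expl : V -> seq nat -> seq move -> seq (nat * V) -> Prop :=
| CE_leaf v A : is_leaf v -> cost_expl v A [::] [seq (a, v) | a <- A]
| CE_node v A cs S F :
    ~~ is_leaf v ->
    perm_eq cs (children v) ->
    (cs = [::] \/ UC v = Some (last v cs)) ->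
    expl_children v cs A S F ->
    cost_expl v A S F
with expl_children : V -> seq V -> seq nat -> seq move -> seq (nat * V) -> Prop :=
| EC_nil v avail : expl_children v [::] avail [::] [seq (a, v) | a <- avail]
| EC_noret v c cs avail B Sc Fc S F :
    uniq B -> size B = K c -> {subset B <= avail} ->
    cost_expl c B Sc Fc ->
    ~~ ((Some c != UC v) && (dist v (UL c) <= dist r v + q)) ->
    expl_children v cs [seq a <- avail | a \notin B] S F ->
    expl_children v (c :: cs) avail ([seq Step a c | a <- B] ++ Sc ++ S) (Fc ++ F)
| EC_ret v c cs avail B Sc Fc a S F :
    uniq B -> size B = K c -> {subset B <= avail} ->
    cost_expl c B Sc Fc ->
    (Some c != UC v) && (dist v (UL c) <= dist r v + q) ->
    (a, UL c) \in Fc ->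
    expl_children v cs (rcons [seq b <- avail | b \notin B] a) S F ->
    expl_children v (c :: cs) avail
      ([seq Step b c | b <- B] ++ Sc ++ up_moves #|V| a (UL c) v ++ S)
      ([seq p <- Fc | p.1 != a] ++ F).

Definition is_CostExpl (S : seq move) : Prop :=
  exists S0 F, cost_expl r (iota 0 (K r)) S0 F /\ S = nseq (K r) Invoke ++ S0.

End Tree.

From Pilot Require Import Defs.
From mathcomp Require Import all_boot all_order all_algebra.
From mathcomp Require Import zify ring lra.
Import Order.TTheory GRing.Theory Num.Theory.
Local Open Scope ring_scope.
Set Implicit Arguments. Unset Strict Implicit. Unset Printing Implicit Defensive.

(* Every exploring strategy pays at least k q + sum_u w u * f (N u), where k is its number of
   agents, N u the number of agents ending in the subtree of u, f n = n for n > 0 and f 0 = 2: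
   the edge above u is crossed once by each agent ending below it, and twice if u is visited
   but no agent stays below it.  Let D v = d(r, v) + q be the price of bringing a fresh agent
   to v and G v the cost CostExpl spends below v.  Induction on the tree shows
     G v + K v * D v <= sum_(u below v) w u * f (N u) + N v * D v   whenever N v > 0,
   which at the root says that CostExpl, of cost K r * q + G r, is no more expensive than any
   strategy.  The induction uses, for branches where no agent ends, the companion bound that a
   branch c handled by K c agents costs at most what a single agent exploring it and stopping
   at UL c pays, 2 W c - d(c, UL c), plus (K c - 1) * D c.  Running CostExpl symbolically shows
   that it explores the tree at cost K r * q + G r. *)

Scheme cost_expl_mut_ind := Minimality for cost_expl Sort Prop
with expl_children_mut_ind := Minimality for expl_children Sort Prop.

Lemma sum_nat_count (T : Type) (s : seq T) (a : pred T) :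
  (\sum_(x <- s) a x)%N = count a s.
Proof. by elim: s => [|x s IH]; rewrite ?big_nil ?big_cons ?IH. Qed.

Lemma sum_nat_gt0_seq (T : eqType) (s : seq T) (F : T -> nat) :
  (0 < \sum_(x <- s) F x)%N -> exists2 x, x \in s & (0 < F x)%N.
Proof.
by rewrite lt0n sum_nat_seq_neq0 => /hasP[x xs /= Fx]; exists x; rewrite // lt0n.
Qed.

Lemma sum_nat_seq_eq0_mem (T : eqType) (s : seq T) (F : T -> nat) x :
  (\sum_(y <- s) F y)%N = 0%N -> x \in s -> F x = 0%N.
Proof. by move/eqP; rewrite sum_nat_seq_eq0 => /allP h /h /eqP. Qed.

Lemma leq_sum_mem (T : eqType) (s : seq T) (F : T -> nat) x :
  x \in s -> (F x <= \sum_(y <- s) F y)%N.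
Proof.
elim: s => [//|y s IH]; rewrite inE big_cons => /orP[/eqP->|xs].
  exact: leq_addr.
exact: leq_trans (IH xs) (leq_addl _ _).
Qed.

Lemma ler_sum_pair (T : eqType) (U : numDomainType) (s : seq T) (F : T -> U) a b :
  uniq s -> a \in s -> b \in s -> a != b -> (forall x, x \in s -> 0 <= F x) ->
  F a + F b <= \sum_(x <- s) F x.
Proof.
move=> us aS bS ab F0; rewrite (bigD1_seq a) //= -big_filter (bigD1_seq b) ?filter_uniq //=.
  rewrite addrA lerDl big_seq_cond sumr_ge0 // => x /andP[].
  by rewrite mem_filter => /andP[_ /F0].
by rewrite mem_filter eq_sym ab.
Qed.

Lemma count_set_nth (T : eqType) (p : pred T) (s : seq T) x0 i y :
  (i < size s)%N -> (count p (set_nth x0 s i y) + p (nth x0 s i) = count p s + p y)%N.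
Proof.
elim: s i => [//|a s IH] [|i] /= h; first by case: (p a); case: (p y) => /=; lia.
by have := IH i h; lia.
Qed.

Lemma perm_cat_filter_notin (T : eqType) (A B : seq T) :
  uniq A -> uniq B -> {subset B <= A} -> perm_eq (B ++ [seq a <- A | a \notin B]) A.
Proof.
move=> uA uB sBA; apply: uniq_perm => //.
  rewrite cat_uniq uB filter_uniq // andbT /=.
  by apply/hasPn => x; rewrite mem_filter => /andP[].
move=> x; rewrite mem_cat mem_filter; case xB: (x \in B) => //=.
by rewrite sBA.
Qed.

Lemma size_filter_notin (T : eqType) (A B : seq T) :
  uniq A -> uniq B -> {subset B <= A} ->
  size [seq a <- A | a \notin B] = (size A - size B)%N.
Proof.
move=> uA uB sBA; have := perm_size (perm_cat_filter_notin uA uB sBA).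
by rewrite size_cat => <-; rewrite addKn.
Qed.

Lemma perm_cat_filter_notin_rcons (T : eqType) (A B : seq T) a :
  uniq A -> uniq B -> {subset B <= A} -> a \in B ->
  perm_eq ([seq b <- B | b != a] ++ rcons [seq b <- A | b \notin B] a) A.
Proof.
move=> uA uB sBA aB; apply: uniq_perm => //.
  rewrite cat_uniq rcons_uniq !filter_uniq // mem_filter aB /= andbT.
  apply/hasPn => x; rewrite mem_rcons inE mem_filter => /orP[/eqP->|/andP[xB _]].
    by rewrite mem_filter eqxx.
  by rewrite mem_filter (negbTE xB) andbF.
move=> x; rewrite mem_cat mem_rcons inE !mem_filter.
case: (eqVneq x a) => [->|xa] /=; first by rewrite sBA.
by case xB: (x \in B) => //=; rewrite sBA.
Qed.

(** * Rooted trees *)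

Section Tree.
Variables (V : finType) (r : V) (par : V -> V).
Hypothesis Htree : is_rooted_tree r par.

Local Notation anc := (is_anc par).
Local Notation children := (children r par).

Definition below (v u : V) : bool := anc v u && (u != v).

Lemma par_root : par r = r. Proof. by case: Htree. Qed.

Lemma iter_par_root n : iter n par r = r.
Proof. exact/iter_fix/par_root. Qed.

Lemma iter_par_ge n v : (#|V| <= n)%N -> iter n par v = r.
Proof.
case: Htree => _ full le; rewrite -(subnK le) iterD full; exact: iter_par_root.
Qed.

Lemma ancP y x : reflect (exists n, iter n par x = y) (anc y x).
Proof.
apply: (iffP existsP) => [[n /eqP <-]|[n Hn]]; first by exists n.
have [le|lt] := leqP n #|V|.
  by exists (Ordinal (le : n < #|V|.+1)%N); apply/eqP.
by exists ord_max; apply/eqP; rewrite /= iter_par_ge // -Hn iter_par_ge // ltnW.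
Qed.

Lemma ancE y x : anc y x = (y == x) || anc y (par x).
Proof.
apply/ancP/orP => [[[|n] Hn]|[/eqP->|/ancP[n Hn]]].
- by left; rewrite -Hn.
- by right; apply/ancP; exists n; rewrite -iterSr.
- by exists 0%N.
- by exists n.+1; rewrite iterSr.
Qed.

Lemma anc_refl x : anc x x. Proof. by apply/ancP; exists 0%N. Qed.

Lemma anc_par x : anc (par x) x. Proof. by rewrite ancE anc_refl orbT. Qed.

Lemma anc_root x : anc r x.
Proof. by apply/ancP; exists #|V|; exact: iter_par_ge. Qed.

Lemma anc_trans a b c : anc a b -> anc b c -> anc a c.
Proof.
by move=> /ancP[n Hn] /ancP[m Hm]; apply/ancP; exists (n + m)%N; rewrite iterD Hm.
Qed.

Lemma anc_of_root y : anc y r -> y = r.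
Proof. by move=> /ancP[n <-]; rewrite iter_par_root. Qed.

Lemma anc_antisym x y : anc x y -> anc y x -> x = y.
Proof.
move=> /ancP[n Hn] /ancP[m Hm].
have [/eqP|pos] := posnP (n + m); first by rewrite addn_eq0 => /andP[/eqP n0 _]; rewrite -Hn n0.
have cyc : iter (n + m) par x = x by rewrite iterD Hm.
have : iter (#|V| * (n + m)) par x = x by rewrite iterM; exact: iter_fix.
rewrite iter_par_ge ?leq_pmulr // => xr.
by move: Hm; rewrite -xr iter_par_root.
Qed.

Lemma par_neq x : x != r -> par x != x.
Proof.
move=> xr; apply: contraNneq xr => px.
by rewrite -(iter_par_ge x (leqnn _)) (iter_fix _ px).
Qed.

Lemma anc_par_self x : x != r -> anc x (par x) = false.
Proof.
move=> xr; apply/negbTE/negP => a.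
by move: (par_neq xr); rewrite (anc_antisym (anc_par x) a) eqxx.
Qed.

Lemma anc_total a b x : anc a x -> anc b x -> anc a b || anc b a.
Proof.
move=> /ancP[n Hn] /ancP[m Hm]; have [le|lt] := leqP n m.
  by apply/orP; right; apply/ancP; exists (m - n)%N; rewrite -Hn -iterD subnK.
by apply/orP; left; apply/ancP; exists (n - m)%N; rewrite -Hm -iterD subnK // ltnW.
Qed.

Lemma mem_children c v : (c \in children v) = (c != r) && (par c == v).
Proof. by rewrite mem_filter mem_enum andbT. Qed.

Lemma children_uniq v : uniq (children v).
Proof. exact/filter_uniq/enum_uniq. Qed.

Section Child.
Variables (v c : V).
Hypothesis cv : c \in children v.

Lemma child_neq_root : c != r. Proof. by move: cv; rewrite mem_children => /andP[]. Qed.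

Lemma child_par : par c = v. Proof. by move: cv; rewrite mem_children => /andP[_ /eqP]. Qed.

Lemma child_anc : anc v c. Proof. by rewrite -child_par anc_par. Qed.

Lemma anc_child_parent : anc c v = false.
Proof. by rewrite -child_par anc_par_self // child_neq_root. Qed.

End Child.

Lemma child_unique v c1 c2 u : c1 \in children v -> c2 \in children v ->
  anc c1 u -> anc c2 u -> c1 = c2.
Proof.
wlog h: c1 c2 / anc c1 c2.
  move=> H h1 h2 a1 a2; case/orP: (anc_total a1 a2) => h; first exact: H.
  by symmetry; apply: H.
move=> h1 h2 _ _; apply/eqP; apply: contraT => ne.
by move: h; rewrite ancE (negbTE ne) (child_par h2) anc_child_parent.
Qed.

Lemma below_child v u : below v u -> exists2 c, c \in children v & anc c u.
Proof.
case/andP=> /ancP[n]; elim: n u => [|n IH] u; first by move=> /= ->; rewrite eqxx.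
rewrite iterSr => h uv; case: (eqVneq (par u) v) => [pu|puv].
  exists u; last exact: anc_refl.
  by rewrite mem_children pu eqxx andbT; apply: contraNneq uv => ur; rewrite -pu ur par_root.
by have [c c1 c2] := IH _ h puv; exists c; rewrite // ancE c2 orbT.
Qed.

Lemma anc_cases v x : anc v x -> x = v \/ exists2 c, c \in children v & anc c x.
Proof.
move=> a; case: (eqVneq x v) => [->|ne]; first by left.
by right; apply: below_child; rewrite /below a.
Qed.

Lemma count_children_anc v u : count (anc^~ u) (children v) = below v u.
Proof.
case bvu: (below v u).
  have [c c1 c2] := below_child bvu.
  rewrite (@eq_in_count _ _ (pred1 c)) ?count_uniq_mem ?children_uniq ?c1 //.
  by move=> c' c'v /=; apply/idP/eqP => [h|->//]; exact: child_unique c'v c1 h c2.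
apply/eqP; rewrite eqn0Ngt -has_count; apply/hasPn => c cv; apply: contraFN bvu => ac.
rewrite /below (anc_trans (child_anc cv) ac); apply: contraTneq ac => ->.
by rewrite anc_child_parent.
Qed.

Lemma sum_below (U : nmodType) v (F : V -> U) :
  \sum_(u | below v u) F u = \sum_(c <- children v) (F c + \sum_(u | below c u) F u).
Proof.
have branch_sum c : F c + \sum_(u | below c u) F u = \sum_u F u *+ anc c u.
  rewrite [RHS](bigD1 c) // anc_refl mulr1n; congr (_ + _).
  rewrite [RHS]big_mkcond [LHS]big_mkcond; apply: eq_bigr => u _.
  by rewrite /below mulrb; case: (anc c u); case: (u != c).
under [RHS]eq_bigr => c _ do rewrite branch_sum.
rewrite exchange_big /= big_mkcond; apply: eq_bigr => u _.
by rewrite sumrMnr sum_nat_count count_children_anc mulrb.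
Qed.

Lemma count_anc_children v (s : seq V) :
  count (anc v) s = (count (pred1 v) s + \sum_(c <- children v) count (anc c) s)%N.
Proof.
elim: s => [|x s IH] /=; first by rewrite big1.
rewrite big_split /= IH sum_nat_count count_children_anc /below.
by case: (eqVneq x v) => [->|ne]; rewrite ?anc_refl //=; case: (anc v x) => /=; lia.
Qed.

Lemma tree_ind (P : V -> Prop) :
  (forall v, (forall c, c \in children v -> P c) -> P v) -> forall v, P v.
Proof.
move=> H v; suff: forall n v, (#|[set x | anc v x]| <= n)%N -> P v by apply.
elim=> [|n IH] u hu.
  by move: hu; rewrite leqn0 => /eqP/cards0_eq/setP/(_ u); rewrite !inE anc_refl.
apply: H => c cu; apply: IH; rewrite -ltnS; apply: leq_trans hu; apply: proper_card.
apply/properP; split.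
  by apply/subsetP => x; rewrite !inE; exact: anc_trans (child_anc cu).
by exists u; rewrite !inE ?anc_refl ?anc_child_parent.
Qed.


Section Weighted.
Variables (R : realFieldType) (w : V -> R).
Hypothesis Hw : forall v, v != r -> 0 < w v.

Local Notation depth := (depth r par w).
Local Notation depth_aux := (depth_aux r par w).
Local Notation dist := (dist r par w).

Lemma depth_auxS n v :
  depth_aux n.+1 v = if v == r then 0 else w v + depth_aux n (par v).
Proof. by []. Qed.

Lemma depth_aux_stable n m v : iter n par v = r -> (n <= m)%N -> depth_aux m v = depth_aux n v.
Proof.
have stable k x : iter k par x = r -> depth_aux k.+1 x = depth_aux k x.
  elim: k x => [|k IH] x; first by move=> /= ->; rewrite eqxx.
  by rewrite iterSr => h; rewrite depth_auxS [depth_aux k.+1 x]depth_auxS IH.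
move=> h; elim: m => [|m IH]; first by rewrite leqn0 => /eqP->.
rewrite leq_eqVlt => /orP[/eqP <-//|]; rewrite ltnS => le.
by rewrite stable ?IH // -(subnK le) iterD h iter_par_root.
Qed.

Lemma depthE v : depth v = if v == r then 0 else w v + depth (par v).
Proof.
have [_ full] := Htree; have n0 : (0 < #|V|)%N by apply/card_gt0P; exists r.
rewrite /Defs.depth; move: (full v) (full (par v)); case: #|V| n0 => [//|n] _ h1 h2.
by rewrite depth_auxS (@depth_aux_stable n n.+1) // -iterSr.
Qed.

Lemma depth_root : depth r = 0. Proof. by rewrite depthE eqxx. Qed.

Lemma depth_par c : c != r -> depth c = w c + depth (par c).
Proof. by move=> cr; rewrite depthE (negbTE cr). Qed.

Lemma depth_ge0 v : 0 <= depth v.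
Proof.
rewrite /Defs.depth; elim: #|V| v => [|n IH] v //=; case: eqP => // /eqP vr.
by rewrite addr_ge0 // ltW // Hw.
Qed.

Lemma depth_anc z v : anc z v -> depth z <= depth v.
Proof.
move=> /ancP[n]; elim: n v => [|n IH] v; first by move=> /= ->.
rewrite iterSr => /IH/le_trans; apply.
have [->|vr] := eqVneq v r; first by rewrite par_root.
by rewrite (depth_par vr) lerDr ltW // Hw.
Qed.

Lemma depth_child v c : c \in children v -> depth c = depth v + w c.
Proof. by move=> cv; rewrite (depth_par (child_neq_root cv)) (child_par cv) addrC. Qed.

Lemma dist_anc v y : anc v y -> dist v y = depth y - depth v.
Proof.
move=> a; rewrite /Defs.dist.
have -> : \big[Num.max/0]_(z | anc z v && anc z y) depth z = depth v.
  apply/le_anti/andP; split.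
    by apply: bigmax_le => [|z /andP[az _]]; [exact: depth_ge0 | exact: depth_anc].
  by apply: le_bigmax_cond; rewrite anc_refl a.
by rewrite mulr2n mulrDl mul1r; lra.
Qed.

Lemma dist_root v : dist r v = depth v.
Proof. by rewrite dist_anc ?depth_root ?subr0 // anc_root. Qed.


(** * Executing strategies *)

Section Moves.
Variable q : R.

Local Notation step := (step r par w q).

Definition run (o : option (state R V)) (S : seq (move V)) : option (state R V) :=
  foldl (fun o m => if o is Some s then step s m else None) o S.

Lemma run_cat o S1 S2 : run o (S1 ++ S2) = run (run o S1) S2.
Proof. exact: foldl_cat. Qed.

Lemma run_None S : run None S = None.
Proof. by elim: S. Qed.

Lemma step_down pos vis c a y : (a < size pos)%N -> y != r -> par y = nth r pos a ->
  step (pos, vis, c) (Step a y) = Some (set_nth r pos a y, y |: vis, c + w y).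
Proof.
move=> apos yr py; rewrite /step apos /adj yr py eqxx orbT /= /ew.
case: andP => // [[_ /eqP pxy]].
by move: (anc_par_self yr); rewrite py -pxy anc_par.
Qed.

Lemma step_up pos vis c a : (a < size pos)%N -> nth r pos a != r ->
  step (pos, vis, c) (Step a (par (nth r pos a))) =
  Some (set_nth r pos a (par (nth r pos a)), par (nth r pos a) |: vis, c + w (nth r pos a)).
Proof. by move=> apos xr; rewrite /step apos /adj xr eqxx /= /ew xr eqxx. Qed.

Lemma run_up_moves n a v x pos vis c :
  (exists2 k, (k <= n)%N & iter k par x = v) -> (a < size pos)%N -> nth r pos a = x ->
  exists pos' vis',
    run (Some (pos, vis, c)) (up_moves par n a x v) = Some (pos', vis', c + (depth x - depth v))
    /\ [/\ size pos' = size pos, forall b, nth r pos' b = if b == a then v else nth r pos b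
         & vis \subset vis'].
Proof.
elim: n x pos vis c => [|n IH] x pos vis c [k kn hk] apos hx.
  move: kn hk; rewrite leqn0 => /eqP-> /= xv.
  exists pos, vis; rewrite xv subrr addr0; split=> //; split=> // b.
  by case: eqP => // ->; rewrite hx.
rewrite /=; case: eqP => [xv|/eqP xv].
  exists pos, vis; rewrite xv subrr addr0; split=> //; split=> // b.
  by case: eqP => // ->; rewrite hx.
have xr : x != r by apply: contraNneq xv => xr; move: hk; rewrite xr iter_par_root => ->.
case: k kn hk => [|k] kn hk; first by move: xv; rewrite -hk eqxx.
rewrite -[run _ _]/(run (step (pos, vis, c) (Step a (par x))) _) -hx step_up ?hx //.
have hk' : iter k par (par x) = v by rewrite -iterSr.
have [||pos' [vis' [-> [s1 s2 s3]]]] :=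
  IH (par x) (set_nth r pos a (par x)) (par x |: vis) (c + w x) (ex_intro2 _ _ k kn hk').
- by rewrite size_set_nth leq_max apos orbT.
- by rewrite nth_set_nth /= eqxx.
exists pos', vis'; split; first by rewrite (depth_par xr); congr (Some (_, _, _)); ring.
split.
- by rewrite s1 size_set_nth; apply/maxn_idPr.
- by move=> b; rewrite s2 nth_set_nth /=; case: eqP.
- exact: subset_trans (subsetUr _ _) s3.
Qed.

Definition located (pos : seq V) (A : seq nat) (v : V) : Prop :=
  forall a, a \in A -> (a < size pos)%N /\ nth r pos a = v.

Lemma run_down_moves (B : seq nat) v c pos vis c0 : c \in children v -> uniq B ->
  located pos B v ->
  exists pos' vis',
    run (Some (pos, vis, c0)) [seq Step a c | a <- B] = Some (pos', vis', c0 + (size B)%:R * w c)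
    /\ [/\ size pos' = size pos, forall a, nth r pos' a = if a \in B then c else nth r pos a,
         vis \subset vis' & B != [::] -> c \in vis'].
Proof.
move=> cv; elim: B pos vis c0 => [|a B IH] pos vis c0 uB HB.
  by exists pos, vis; rewrite mul0r addr0.
move: uB; rewrite cons_uniq => /andP[aB uB].
have [apos anth] := HB a (mem_head _ _).
have sz1 : size (set_nth r pos a c) = size pos by rewrite size_set_nth; apply/maxn_idPr.
have [|pos' [vis' [e [s1 s2 s3 s4]]]] := IH (set_nth r pos a c) (c |: vis) (c0 + w c) uB.
  move=> b bB; have [bpos bv] : (b < size pos)%N /\ nth r pos b = v.
    by apply: HB; rewrite inE bB orbT.
  by rewrite sz1 nth_set_nth /=; case: eqP => [eba|_] //; move: aB; rewrite -eba bB.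
exists pos', vis'; split.
  rewrite map_cons -[run _ _]/(run (step _ _) _).
  rewrite step_down ?anth ?(child_neq_root cv) ?(child_par cv) //.
  by rewrite e; congr (Some (_, _, _)); rewrite /= -addn1 natrD; ring.
split.
- by rewrite s1.
- by move=> b; rewrite s2 nth_set_nth /= inE; case: eqP => [->|_]; case: (_ \in B).
- exact: subset_trans (subsetUr _ _) s3.
- move=> _; case: (eqVneq B [::]) => [Bn|]; last exact: s4.
  by move: e; rewrite Bn => -[_ <- _]; exact: setU11.
Qed.

Lemma run_invokes k pos vis c :
  run (Some (pos, vis, c)) (nseq k (Invoke V)) =
  Some (pos ++ nseq k r, if k == 0%N then vis else r |: vis, c + k%:R * q).
Proof.
elim: k pos vis c => [|k IH] pos vis c; first by rewrite /= cats0 mul0r addr0.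
rewrite -[run _ _]/(run (Some (rcons pos r, r |: vis, c + q)) _) IH cat_rcons.
congr (Some (_, _, _)); first by case: k {IH} => //= k; rewrite setUA setUid.
by rewrite -[k.+1]addn1 natrD; ring.
Qed.


(** * A lower bound for every exploring strategy *)

Definition agents_below (pos : seq V) (u : V) : nat := count (anc u) pos.

Definition min_traversals (n : nat) : R := if (0 < n)%N then n%:R else 2.

Definition traversals_lb (pos : seq V) (vis : {set V}) (u : V) : R :=
  if (0 < agents_below pos u)%N then (agents_below pos u)%:R else if u \in vis then 2 else 0.

Definition traversal_cost (pos : seq V) (v : V) : R :=
  \sum_(u | below v u) w u * min_traversals (agents_below pos u).

Definition cost_invariant (s : state R V) : Prop :=
  let: (pos, vis, c) := s in
  [/\ forall i, (i < size pos)%N -> nth r pos i \in vis,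
      forall x, x \in vis -> par x \in vis,
      size pos = 0%N -> vis = set0
    & (size pos)%:R * q + \sum_(u | u != r) w u * traversals_lb pos vis u <= c].

Lemma cost_invariant_init : cost_invariant ([::], set0, 0).
Proof.
split=> // [x|]; first by rewrite inE.
by rewrite mul0r add0r big1 // => u _; rewrite /traversals_lb inE mulr0.
Qed.

Section MoveAgent.
Variables (pos : seq V) (vis : {set V}) (i : nat) (y : V).
Hypothesis ipos : (i < size pos)%N.
Let x := nth r pos i.
Let pos' := set_nth r pos i y.

Lemma agents_below_set_nth u :
  (agents_below pos' u + anc u x = agents_below pos u + anc u y)%N.
Proof. exact: count_set_nth. Qed.

Lemma traversals_lb_up : x != r -> par x = y -> y \in vis ->
  (forall u, u != x -> traversals_lb pos' (y |: vis) u = traversals_lb pos vis u) /\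
  traversals_lb pos' (y |: vis) x <= traversals_lb pos vis x + 1.
Proof.
move=> xr pxy yv; split=> [u ux|].
  have := agents_below_set_nth u; rewrite [anc u x]ancE (negbTE ux) pxy /=.
  move/addIn; rewrite /traversals_lb => ->.
  by rewrite !inE; case: (eqVneq u y) => [->|] //=; rewrite yv.
have := agents_below_set_nth x; rewrite anc_refl -pxy anc_par_self // addn0 addn1.
rewrite /traversals_lb => <-; rewrite ltn0Sn mulrSr.
by case: ifP => _; [lra | have := ler0n R (agents_below pos' x); case: ifP => _; lra].
Qed.

Lemma traversals_lb_down : y != r -> par y = x ->
  (forall u, u != y -> traversals_lb pos' (y |: vis) u = traversals_lb pos vis u) /\
  traversals_lb pos' (y |: vis) y <= traversals_lb pos vis y + 1.
Proof.
move=> yr pyx; split=> [u uy|].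
  have := agents_below_set_nth u; rewrite [anc u y]ancE (negbTE uy) pyx /=.
  by move/addIn; rewrite /traversals_lb !inE (negbTE uy) => ->.
have := agents_below_set_nth y; rewrite anc_refl -pyx anc_par_self // addn0 addn1.
rewrite /traversals_lb => ->; rewrite ltn0Sn mulrSr.
case: ifP => [_|]; first lra.
by rewrite lt0n => /negbFE/eqP->; case: ifP => _; lra.
Qed.

End MoveAgent.

Lemma weighted_sum_update (F F' : V -> R) z : z != r ->
  (forall u, u != z -> F' u = F u) -> F' z <= F z + 1 ->
  \sum_(u | u != r) w u * F' u <= \sum_(u | u != r) w u * F u + w z.
Proof.
move=> zr F'F F'z; rewrite (bigD1 z) // [X in _ <= X + _](bigD1 z) //=.
rewrite (eq_bigr (fun u => w u * F u)); last by move=> u /andP[_ uz]; rewrite F'F.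
by have := ler_wpM2l (ltW (Hw zr)) F'z; lra.
Qed.

Lemma cost_invariant_invoke pos vis c :
  cost_invariant (pos, vis, c) -> cost_invariant (rcons pos r, r |: vis, c + q).
Proof.
case=> Hpos Hcl _ Hc; split.
- move=> j; rewrite size_rcons ltnS nth_rcons => _.
  by case: ltnP => [jl|_]; [rewrite inE Hpos ?orbT | case: eqP => _; rewrite setU11].
- move=> x; rewrite !inE => /orP[/eqP->|xv]; first by rewrite par_root eqxx.
  by rewrite Hcl ?orbT.
- by rewrite size_rcons.
rewrite size_rcons -addn1 natrD mulrDl mul1r.
rewrite (eq_bigr (fun u => w u * traversals_lb pos vis u)); first lra.
move=> u ur; congr (_ * _); rewrite /traversals_lb /agents_below -cats1 count_cat /=.
have -> : anc u r = false by apply: contraNF ur => /anc_of_root ->.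
by rewrite !inE (negbTE ur) /= !addn0.
Qed.

Lemma cost_invariant_move pos vis c i y :
  cost_invariant (pos, vis, c) -> (i < size pos)%N -> adj r par (nth r pos i) y ->
  cost_invariant (set_nth r pos i y, y |: vis, c + ew r par w (nth r pos i) y).
Proof.
set x := nth r pos i; case=> Hpos Hcl _ Hc ipos xy.
have xv : x \in vis by exact: Hpos.
have sz : size (set_nth r pos i y) = size pos by rewrite size_set_nth; apply/maxn_idPr.
split.
- move=> j; rewrite sz nth_set_nth /= => jl; case: eqP => _; first by rewrite setU11.
  by rewrite inE Hpos ?orbT.
- move=> z; rewrite !inE => /orP[/eqP->|zv]; last by rewrite Hcl ?orbT.
  case/orP: xy => /andP[_ /eqP pxy]; last by rewrite pxy xv orbT.
  by rewrite -pxy !Hcl ?orbT.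
- by rewrite sz => /size0nil pe; move: ipos; rewrite pe.
rewrite sz /ew; case: ifPn => [/andP[xr /eqP pxy]|up].
  have yv : y \in vis by rewrite -pxy Hcl.
  have [lbE lbx] := traversals_lb_up ipos xr pxy yv.
  by have := weighted_sum_update xr lbE lbx; lra.
have /andP[yr /eqP pyx] : (y != r) && (par y == x) by move: xy; rewrite /adj (negbTE up).
have [lbE lby] := traversals_lb_down vis ipos yr pyx.
by have := weighted_sum_update yr lbE lby; lra.
Qed.

Lemma cost_invariant_run S s s' :
  cost_invariant s -> run (Some s) S = Some s' -> cost_invariant s'.
Proof.
elim: S s => [|m S IH] [[pos vis] c] inv /=; first by case=> <-.
case: m => [|i y] /=; first exact/IH/cost_invariant_invoke.
case: ifP => [/andP[ipos xy]|_]; last by rewrite run_None.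
exact/IH/cost_invariant_move.
Qed.

Lemma explored_cost_lb S pos c : exec r par w q S = Some (pos, [set: V], c) ->
  (0 < size pos)%N /\ (size pos)%:R * q + traversal_cost pos r <= c.
Proof.
move=> eS; have [_ _ pos0 lb] := cost_invariant_run cost_invariant_init eS.
split; first by rewrite lt0n; apply/negP => /eqP/pos0/setP/(_ r); rewrite !inE.
suff -> : traversal_cost pos r = \sum_(u | u != r) w u * traversals_lb pos [set: V] u by [].
apply: eq_big => [u|u _]; first by rewrite /below anc_root.
by rewrite /traversals_lb /min_traversals inE.
Qed.


(** * Labels and the cost of CostExpl *)

Section Labels.
Hypothesis Hq : 0 <= q.
Variables (K : V -> nat) (UL : V -> V) (UC : V -> option V).
Hypothesis Hlab : is_labeling r par w q K UL UC.

Definition cheap_return (v c : V) : bool := dist v (UL c) <= dist r v + q.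
Definition sends_back (v c : V) : bool := (Some c != UC v) && cheap_return v c.
Definition saves_agent (v c : V) : bool := (K c == 1%N) && cheap_return v c.

(* CostExpl moves K c agents across the edge (par c, c) and, when it sends one back, walks it
   from UL c up to par c. *)
Definition child_cost (c : V) : R :=
  (K c)%:R * w c + (if sends_back (par c) c then dist (par c) (UL c) else 0).
Definition expl_cost (v : V) : R := \sum_(u | below v u) child_cost u.
Definition branch_cost (c : V) : R := child_cost c + expl_cost c.
Definition subtree_weight (v : V) : R := \sum_(u | below v u) w u.
(* The paper's d_r at v: invoking an agent and walking it from the root to v. *)
Definition agent_price (v : V) : R := depth v + q.

Lemma expl_costE v : expl_cost v = \sum_(c <- children v) branch_cost c.
Proof. exact: sum_below. Qed.

Lemma subtree_weightE v : subtree_weight v = \sum_(c <- children v) (w c + subtree_weight c).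
Proof. exact: sum_below. Qed.

Lemma K_label v : K v = maxn 1 (\sum_(c <- children v) (K c - saves_agent v c))%N.
Proof.
move: (Hlab v); rewrite /is_leaf; case: ifP => [/andP[_ /eqP ->] [-> _ _]|_ [-> _]] //.
by rewrite big_nil.
Qed.

Lemma K_gt0 v : (0 < K v)%N.
Proof. by rewrite K_label leq_max. Qed.

Lemma UC_spec v : children v != [::] ->
  exists2 u, u \in children v & [/\ UC v = Some u,
    forall u', u' \in children v -> dist v (UL u') <= dist v (UL u) & UL v = UL u].
Proof.
move: (Hlab v); rewrite /is_leaf.
by case: (children v) => [//|c cs]; rewrite andbF => -[_ H] _; exact: H.
Qed.

Lemma leaf_label v : children v = [::] -> v != r -> UL v = v /\ K v = 1%N.
Proof. by move=> e vr; move: (Hlab v); rewrite /is_leaf e vr eqxx /= => -[-> ->]. Qed.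

Lemma anc_UL v : v != r -> anc v (UL v).
Proof.
elim/tree_ind: v => v IH vr; have [e|ne] := eqVneq (children v) [::].
  by rewrite (leaf_label e vr).1 anc_refl.
have [u uv [_ _ ->]] := UC_spec ne.
exact: anc_trans (child_anc uv) (IH u uv (child_neq_root uv)).
Qed.

Section LabelledChild.
Variables (v c : V).
Hypothesis cv : c \in children v.

Lemma anc_UL_child : anc v (UL c).
Proof. exact: anc_trans (child_anc cv) (anc_UL (child_neq_root cv)). Qed.

Lemma dist_UL_child : dist v (UL c) = depth (UL c) - depth v.
Proof. exact/dist_anc/anc_UL_child. Qed.

Lemma dist_UL_child_ge0 : 0 <= depth (UL c) - depth v.
Proof. by rewrite subr_ge0 depth_anc ?anc_UL_child. Qed.

Lemma cheap_returnE : cheap_return v c = (depth (UL c) - depth v <= agent_price v).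
Proof. by rewrite /cheap_return dist_UL_child dist_root. Qed.

Lemma agent_price_child : agent_price c = agent_price v + w c.
Proof. by rewrite /agent_price (depth_child cv); ring. Qed.

Lemma child_costE :
  child_cost c = (K c)%:R * w c + (if sends_back v c then depth (UL c) - depth v else 0).
Proof. by rewrite /child_cost (child_par cv) dist_UL_child. Qed.

End LabelledChild.

Lemma agent_price_ge0 v : 0 <= agent_price v.
Proof. by rewrite addr_ge0 ?depth_ge0. Qed.

Lemma far_UL c : c != r -> (1 < K c)%N -> agent_price c < depth (UL c) - depth c.
Proof.
elim/tree_ind: c => c IH cr K2; have [e|ne] := eqVneq (children c) [::].
  by move: K2; rewrite (leaf_label e cr).2.
have [x xc xpos] : exists2 x, x \in children c & (0 < K x - saves_agent c x)%N.
  apply: sum_nat_gt0_seq; move: K2; rewrite K_label.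
  by case: (posnP (\sum_(x <- children c) _)) => [->|].
have [u0 u0c [_ umax ->]] := UC_spec ne.
apply: (@lt_le_trans _ _ (depth (UL x) - depth c)); last first.
  by have := umax x xc; rewrite !dist_UL_child.
have [K2x|K1x] := ltnP 1 (K x).
  have := IH x xc (child_neq_root xc) K2x.
  by rewrite (agent_price_child xc) (depth_child xc); have := Hw (child_neq_root xc); lra.
move: xpos; rewrite /saves_agent (_ : K x = 1%N) ?eqxx; last by have := K_gt0 x; lia.
by rewrite /= (cheap_returnE xc) ltNge; case: (_ <= _).
Qed.

Section ChildReturn.
Variables (v c : V).
Hypothesis cv : c \in children v.

Lemma far_UL_child : (1 < K c)%N -> agent_price v < depth (UL c) - depth v.
Proof.
move=> K2; have := far_UL (child_neq_root cv) K2.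
by rewrite (agent_price_child cv) (depth_child cv); have := Hw (child_neq_root cv); lra.
Qed.

Lemma far_UL_not_saves : ~~ saves_agent v c -> agent_price v < depth (UL c) - depth v.
Proof.
rewrite /saves_agent negb_and => /orP[K1|]; last by rewrite (cheap_returnE cv) -ltNge.
by apply: far_UL_child; have := K_gt0 c; move: K1; lia.
Qed.

Lemma sends_back_saves : sends_back v c -> saves_agent v c.
Proof.
case/andP=> _ cheap; apply: contraT => /far_UL_not_saves.
by rewrite (cheap_returnE cv) in cheap; rewrite ltNge cheap.
Qed.

Lemma sends_backE : Some c != UC v -> sends_back v c = saves_agent v c.
Proof.
move=> cUC; rewrite /sends_back /saves_agent cUC /=.
case cheap: (cheap_return v c); rewrite ?andbF // andbT; apply/esym/eqP.
apply: contraTeq cheap => K1; rewrite (cheap_returnE cv) -ltNge.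
by apply: far_UL_child; have := K_gt0 c; lia.
Qed.

End ChildReturn.

Section SingleAgentBound.
Variables (v x : V).
Hypothesis xv : x \in children v.
Hypothesis IHx : expl_cost x + ((K x)%:R - 1) * agent_price x <=
                 2 * subtree_weight x - (depth (UL x) - depth x).

Lemma branch_cost_ub : Some x != UC v ->
  branch_cost x + (K x - saves_agent v x)%:R * agent_price v <= 2 * (w x + subtree_weight x).
Proof.
move=> xUC; move: IHx; rewrite /branch_cost (child_costE xv) (sends_backE xv xUC).
rewrite (agent_price_child xv) (depth_child xv).
have := Hw (child_neq_root xv); have := agent_price_ge0 v.
case sx: (saves_agent v x).
  move: (sx) => /andP[/eqP-> _]; rewrite subnn /=; lra.
have := far_UL_not_saves xv (negbT sx); rewrite subn0 /=; lra.
Qed.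

Lemma branch_cost_ub_UC : UC v = Some x ->
  branch_cost x + ((K x)%:R - 1) * agent_price v + (depth (UL x) - depth v) <=
  2 * (w x + subtree_weight x).
Proof.
move=> UCx; move: IHx; rewrite /branch_cost (child_costE xv) /sends_back UCx eqxx /=.
rewrite (agent_price_child xv) (depth_child xv); lra.
Qed.

End SingleAgentBound.

(* The right-hand side is the cost of a single agent exploring the subtree of c and stopping
   at UL c; every agent beyond the first is charged agent_price c. *)
Lemma expl_cost_ub c : c != r ->
  expl_cost c + ((K c)%:R - 1) * agent_price c <= 2 * subtree_weight c - (depth (UL c) - depth c).
Proof.
elim/tree_ind: c => c IH cr; have [e|ne] := eqVneq (children c) [::].
  by have [-> ->] := leaf_label e cr; rewrite expl_costE subtree_weightE e !big_nil; lra.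
have [u0 u0c [UCu _ ->]] := UC_spec ne.
have IHc x : x \in children c -> expl_cost x + ((K x)%:R - 1) * agent_price x <=
                                   2 * subtree_weight x - (depth (UL x) - depth x).
  by move=> xc; exact: IH x xc (child_neq_root xc).
rewrite expl_costE subtree_weightE !(bigD1_seq u0) ?children_uniq //=.
set S := (\sum_(x <- children c | x != u0) (K x - saves_agent c x))%N.
have rest : \sum_(x <- children c | x != u0) branch_cost x + S%:R * agent_price c <=
            2 * \sum_(x <- children c | x != u0) (w x + subtree_weight x).
  rewrite natr_sum mulr_suml -big_split mulr_sumr /= big_seq_cond [X in _ <= X]big_seq_cond.
  apply: ler_sum => x /andP[xc xu0]; apply: (branch_cost_ub xc (IHc x xc)).
  by rewrite UCu; apply: contra_neq xu0 => -[].
have HK : (K c <= S + K u0)%N.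
  rewrite K_label (bigD1_seq u0) ?children_uniq //= -/S geq_max.
  by have := K_gt0 u0; lia.
have := branch_cost_ub_UC u0c (IHc u0 u0c) UCu.
have := ler_wpM2r (agent_price_ge0 c) (_ : (K c)%:R - 1 <= S%:R + (K u0)%:R - 1 :> R).
by rewrite -natrD lerD2r ler_nat => /(_ HK); lra.
Qed.


(** * CostExpl matches the lower bound *)

Section LowerBound.
Variable pos : seq V.
Local Notation N := (agents_below pos).

Definition branch_traversal_cost (v c : V) : R :=
  w c * min_traversals (N c) + traversal_cost pos c + (N c)%:R * agent_price v.

Lemma traversal_costE v :
  traversal_cost pos v + (N v)%:R * agent_price v =
  \sum_(c <- children v) branch_traversal_cost v c + (count (pred1 v) pos)%:R * agent_price v.
Proof.
have -> : traversal_cost pos v =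
    \sum_(c <- children v) (w c * min_traversals (N c) + traversal_cost pos c).
  exact: sum_below.
rewrite /branch_traversal_cost /agents_below count_anc_children natrD natr_sum mulrDl.
by rewrite mulr_suml !big_split /=; ring.
Qed.

Lemma traversal_cost_empty c : N c = 0%N -> traversal_cost pos c = 2 * subtree_weight c.
Proof.
move=> N0; rewrite mulr_sumr; apply: eq_bigr => u /andP[cu _].
have : (N u <= N c)%N by apply: sub_count => y; exact: anc_trans.
by rewrite N0 leqn0 /min_traversals => /eqP->; rewrite mulrC.
Qed.

Section Branch.
Variables (v c : V).
Hypothesis cv : c \in children v.
Let L := depth (UL c) - depth v.

Lemma branch_traversal_lb_occupied : (0 < N c)%N ->
  expl_cost c + (K c)%:R * agent_price c <= traversal_cost pos c + (N c)%:R * agent_price c ->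
  branch_cost c + (K c)%:R * agent_price v - (if sends_back v c then L else 0) <=
  branch_traversal_cost v c.
Proof.
move=> Npos; rewrite /branch_traversal_cost /branch_cost (child_costE cv) /min_traversals Npos.
by rewrite (agent_price_child cv); case: (sends_back v c); rewrite /L; lra.
Qed.

Lemma branch_traversal_lb_empty : N c = 0%N ->
  branch_cost c + ((K c)%:R - 1) * agent_price v + (if sends_back v c then 0 else L) <=
  branch_traversal_cost v c.
Proof.
move=> N0; rewrite /branch_traversal_cost /branch_cost (child_costE cv) /min_traversals N0 /=.
rewrite (traversal_cost_empty N0); have := expl_cost_ub (child_neq_root cv).
by rewrite (agent_price_child cv) (depth_child cv); case: (sends_back v c); rewrite /L; lra.
Qed.

Lemma branch_traversal_lb : ((0 < N c)%N ->
    expl_cost c + (K c)%:R * agent_price c <= traversal_cost pos c + (N c)%:R * agent_price c) ->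
  branch_cost c + (K c - saves_agent v c)%:R * agent_price v <= branch_traversal_cost v c.
Proof.
move=> IHc; have := agent_price_ge0 v; have := dist_UL_child_ge0 cv; rewrite -/L.
rewrite natrB; last by have := K_gt0 c; case: (saves_agent v c).
have [N0|Npos] := posnP (N c).
  have := branch_traversal_lb_empty N0; case sc: (saves_agent v c) => /=.
  by case: ifP => _; lra.
  have := far_UL_not_saves cv (negbT sc); rewrite -/L.
  by rewrite (_ : sends_back v c = false) /=; [lra | apply: contraFF sc; exact: sends_back_saves].
have := branch_traversal_lb_occupied Npos (IHc Npos); case back: (sends_back v c).
  rewrite (sends_back_saves cv back); case/andP: back => _.
  by rewrite (cheap_returnE cv) -/L /=; lra.
by case: (saves_agent v c) => /=; lra.
Qed.

End Branch.

(* Here K v = 1.  An occupied branch c0 pays agent_price v up to its return distance, and the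
   branch UC v, which is never returned from, pays at least that distance. *)
Lemma expl_cost_lb_all_saved v :
  (forall c, c \in children v -> K c = 1%N /\ saves_agent v c) ->
  (forall c, c \in children v -> (0 < N c)%N ->
     expl_cost c + (K c)%:R * agent_price c <= traversal_cost pos c + (N c)%:R * agent_price c) ->
  (0 < \sum_(c <- children v) N c)%N ->
  expl_cost v + agent_price v <= \sum_(c <- children v) branch_traversal_cost v c.
Proof.
move=> saved IH Npos; have [c0 c0v Nc0] := sum_nat_gt0_seq Npos.
have [u0 u0v [UCu umax _]] : exists2 u, u \in children v & [/\ UC v = Some u,
    forall u', u' \in children v -> dist v (UL u') <= dist v (UL u) & UL v = UL u].
  by apply: UC_spec; apply: contraTneq c0v => ->.
have u0_back : sends_back v u0 = false by rewrite /sends_back UCu eqxx.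
set delta := fun c => branch_traversal_cost v c - branch_cost c.
suff : agent_price v <= \sum_(c <- children v) delta c.
  by rewrite expl_costE sumrB; lra.
have delta0 x : x \in children v -> 0 <= delta x.
  move=> xv; have [K1 sx] := saved x xv; have := branch_traversal_lb xv (IH x xv).
  by rewrite /delta K1 sx subnn mul0r addr0 subr_ge0.
have delta_occ x : x \in children v -> (0 < N x)%N ->
    agent_price v - (if sends_back v x then depth (UL x) - depth v else 0) <= delta x.
  move=> xv Nx; have := branch_traversal_lb_occupied xv Nx (IH x xv Nx).
  by rewrite (saved x xv).1 /delta; lra.
have [c0E|c0u0] := eqVneq c0 u0.
  have := delta_occ c0 c0v Nc0; rewrite c0E u0_back subr0 => /le_trans; apply.
  by rewrite (bigD1_seq u0) ?children_uniq //= lerDl big_seq_cond sumr_ge0 // => x /andP[/delta0].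
have delta_u0 : depth (UL u0) - depth v <= delta u0.
  have [N0|Nu0] := posnP (N u0).
    have := branch_traversal_lb_empty u0v N0; rewrite u0_back (saved u0 u0v).1 /delta; lra.
  have := delta_occ u0 u0v Nu0; rewrite u0_back subr0; apply: le_trans.
  by have := (saved u0 u0v).2; rewrite /saves_agent (cheap_returnE u0v) => /andP[].
have far : depth (UL c0) - depth v <= depth (UL u0) - depth v.
  by have := umax c0 c0v; rewrite !dist_UL_child.
have := ler_sum_pair (children_uniq v) c0v u0v c0u0 delta0.
have := delta_occ c0 c0v Nc0; have := dist_UL_child_ge0 c0v.
by case: (sends_back v c0); lra.
Qed.

Lemma expl_cost_lb v : (0 < N v)%N ->
  expl_cost v + (K v)%:R * agent_price v <= traversal_cost pos v + (N v)%:R * agent_price v.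
Proof.
elim/tree_ind: v => v IH Nv; rewrite traversal_costE.
set m := count (pred1 v) pos; set S := (\sum_(c <- children v) (K c - saves_agent v c))%N.
have branches : expl_cost v + S%:R * agent_price v <=
                \sum_(c <- children v) branch_traversal_cost v c.
  rewrite expl_costE /S natr_sum mulr_suml -big_split /= big_seq [X in _ <= X]big_seq.
  by apply: ler_sum => c cv; exact: branch_traversal_lb cv (IH c cv).
have m0 : 0 <= m%:R * agent_price v by rewrite mulr_ge0 ?ler0n ?agent_price_ge0.
rewrite K_label -/S; have [S0|Spos] := posnP S; last by rewrite (maxn_idPr Spos); lra.
rewrite S0 (_ : maxn 1 0 = 1%N) // mul1r.
have [m0'|mpos] := posnP m; last first.
  have : agent_price v <= m%:R * agent_price v by rewrite ler_peMl ?agent_price_ge0 ?ler1n.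
  by move: branches; rewrite S0 mul0r addr0; lra.
have saved c : c \in children v -> K c = 1%N /\ saves_agent v c.
  move=> cv; have := sum_nat_seq_eq0_mem S0 cv; have := K_gt0 c.
  by case: (saves_agent v c) => /=; lia.
have Npos : (0 < \sum_(c <- children v) N c)%N.
  by move: Nv; rewrite /agents_below count_anc_children -/m m0'.
by have := expl_cost_lb_all_saved saved IH Npos; lra.
Qed.

End LowerBound.

(** * Running CostExpl *)

Section Execution.
(* expl_spec unfolds to a product, and automatic implicit arguments would be computed on that
   unfolding (making, e.g., the starting positions implicit); they are declared by hand here. *)
Local Unset Implicit Arguments.

Definition expl_spec (v : V) (A : seq nat) (S : seq (move V)) (F : seq (nat * V))
    (cost : R) (covered : pred V) : Prop :=
  forall (pos : seq V) (vis : {set V}) (c0 : R), uniq A -> located pos A v -> v \in vis ->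
  perm_eq (unzip1 F) A /\
  exists (pos' : seq V) (vis' : {set V}),
    run (Some (pos, vis, c0)) S = Some (pos', vis', c0 + cost) /\
    [/\ size pos' = size pos, forall a, a \notin A -> nth r pos' a = nth r pos a,
        forall a p, (a, p) \in F -> nth r pos' a = p, vis \subset vis'
      & {subset covered <= vis'}].

Lemma expl_spec_stay (v : V) (A : seq nat) :
  expl_spec v A [::] [seq (a, v) | a <- A] 0 (pred1 v).
Proof.
move=> pos vis c0 _ locA vv; split; first by rewrite /unzip1 -map_comp map_id.
exists pos, vis; rewrite addr0; split=> //; split=> // [a p|x /eqP->//].
by case/mapP=> b bA [-> ->]; exact: (locA b bA).2.
Qed.

Lemma expl_spec_descend {v c B Sc Fc} : c \in children v -> B != [::] ->
  expl_spec c B Sc Fc (expl_cost c) (anc c) ->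
  expl_spec v B ([seq Step a c | a <- B] ++ Sc) Fc ((size B)%:R * w c + expl_cost c) (anc c).
Proof.
move=> cv Bn specc pos vis c0 uB locB vv.
have [pos1 [vis1 [e1 [sz1 nth1 sub1 cvis1]]]] := run_down_moves vis c0 cv uB locB.
have locB1 : located pos1 B c by move=> a aB; rewrite sz1 nth1 aB; have [] := locB a aB.
have [pF [pos2 [vis2 [e2 [sz2 keep2 fin2 sub2 cov2]]]]] :=
  specc pos1 vis1 (c0 + (size B)%:R * w c) uB locB1 (cvis1 Bn).
split=> //; exists pos2, vis2; split; first by rewrite run_cat e1 e2 addrA.
split=> //; first by rewrite sz2.
- by move=> a aB; rewrite keep2 // nth1 (negbTE aB).
- exact: subset_trans sub1 sub2.
Qed.

Lemma expl_spec_cat {v A B S1 F1 cost1 X1 S2 F2 cost2 X2} : uniq B -> {subset B <= A} ->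
  expl_spec v B S1 F1 cost1 X1 -> expl_spec v [seq a <- A | a \notin B] S2 F2 cost2 X2 ->
  expl_spec v A (S1 ++ S2) (F1 ++ F2) (cost1 + cost2) (predU X1 X2).
Proof.
move=> uB sBA spec1 spec2 pos vis c0 uA locA vv.
have [|pF1 [pos1 [vis1 [e1 [sz1 keep1 fin1 sub1 cov1]]]]] := spec1 pos vis c0 uB _ vv.
  by move=> a /sBA; exact: locA.
have locA' : located pos1 [seq a <- A | a \notin B] v.
  by move=> a; rewrite mem_filter sz1 => /andP[aB aA]; rewrite keep1 //; exact: locA.
have [pF2 [pos2 [vis2 [e2 [sz2 keep2 fin2 sub2 cov2]]]]] :=
  spec2 pos1 vis1 (c0 + cost1) (filter_uniq _ uA) locA' (subsetP sub1 _ vv).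
split.
  by rewrite /unzip1 map_cat (perm_trans (perm_cat pF1 pF2)) // perm_cat_filter_notin.
exists pos2, vis2; split; first by rewrite run_cat e1 e2 addrA.
split.
- by rewrite sz2 sz1.
- move=> a aA; rewrite keep2 ?mem_filter ?(negbTE aA) ?andbF // keep1 //.
  by apply: contra aA; exact: sBA.
- move=> a p; rewrite mem_cat => /orP[aF|]; last exact: fin2.
  have aB : a \in B by rewrite -(perm_mem pF1); exact: (map_f fst aF).
  by rewrite keep2 ?mem_filter ?aB // (fin1 _ _ aF).
- exact: subset_trans sub1 sub2.
- by move=> x /orP[/cov1 /(subsetP sub2)|/cov2].
Qed.

Lemma expl_spec_return {v c avail B Sc Fc a S F cost X} : c \in children v -> uniq B ->
  {subset B <= avail} -> B != [::] -> (a, UL c) \in Fc ->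
  expl_spec c B Sc Fc (expl_cost c) (anc c) ->
  expl_spec v (rcons [seq b <- avail | b \notin B] a) S F cost X ->
  expl_spec v avail ([seq Step b c | b <- B] ++ Sc ++ up_moves par #|V| a (UL c) v ++ S)
    ([seq p <- Fc | p.1 != a] ++ F)
    ((size B)%:R * w c + expl_cost c + (depth (UL c) - depth v) + cost) (predU (anc c) X).
Proof.
move=> cv uB sBA Bn aF /(expl_spec_descend cv Bn) spec1 spec2 pos vis c0 uA locA vv.
have [|pF1 [pos1 [vis1 [e1 [sz1 keep1 fin1 sub1 cov1]]]]] := spec1 pos vis c0 uB _ vv.
  by move=> b /sBA; exact: locA.
have aB : a \in B by rewrite -(perm_mem pF1); exact: (map_f fst aF).
have [||pos2 [vis2 [e2 [sz2 nth2 sub2]]]] := run_up_moves (n := #|V|) (v := v) vis1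
    (c0 + ((size B)%:R * w c + expl_cost c)) _ _ (fin1 _ _ aF).
- have /existsP[k /eqP hk] := anc_UL_child cv.
  by exists k => //; rewrite -ltnS ltn_ord.
- by rewrite sz1; have [] := locA a (sBA a aB).
set A' := rcons [seq b <- avail | b \notin B] a in spec2.
have uA' : uniq A' by rewrite rcons_uniq filter_uniq // mem_filter aB.
have locA' : located pos2 A' v.
  move=> b; rewrite mem_rcons inE sz2 sz1 nth2 => /orP[/eqP->|].
    by rewrite eqxx; have [] := locA a (sBA a aB).
  rewrite mem_filter => /andP[bB bA]; rewrite keep1 // ifN; first exact: locA.
  by apply: contraNneq bB => ->.
have [pF2 [pos3 [vis3 [e3 [sz3 keep3 fin3 sub3 cov3]]]]] :=
  spec2 pos2 vis2 (c0 + ((size B)%:R * w c + expl_cost c) + (depth (UL c) - depth v)) uA' locA'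
    (subsetP sub2 _ (subsetP sub1 _ vv)).
split.
  have -> : unzip1 ([seq p <- Fc | p.1 != a] ++ F) = [seq b <- unzip1 Fc | b != a] ++ unzip1 F.
    by rewrite /unzip1 map_cat filter_map.
  rewrite (perm_trans (perm_cat (perm_filter _ pF1) pF2)) //.
  exact: perm_cat_filter_notin_rcons.
exists pos3, vis3; split.
  by rewrite catA run_cat e1 run_cat e2 e3; congr (Some (_, _, _)); ring.
have outA' b : b \in B -> b != a -> b \notin A'.
  by move=> bB ba; rewrite mem_rcons inE (negbTE ba) mem_filter bB.
split.
- by rewrite sz3 sz2 sz1.
- move=> b bA; have bB : b \notin B by apply: contra bA; exact: sBA.
  have ba : b != a by apply: contraNneq bA => ->; exact: sBA.
  rewrite keep3 ?nth2 ?(negbTE ba) ?keep1 // mem_rcons inE (negbTE ba) mem_filter.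
  by rewrite (negbTE bA) andbF.
- move=> b p; rewrite mem_cat => /orP[|]; last exact: fin3.
  rewrite mem_filter => /andP[/= ba bF].
  have bB : b \in B by rewrite -(perm_mem pF1); exact: (map_f fst bF).
  by rewrite keep3 ?outA' // nth2 (negbTE ba) (fin1 _ _ bF).
- exact: subset_trans sub1 (subset_trans sub2 sub3).
- by move=> x /orP[/cov1 /(subsetP sub2) /(subsetP sub3)|/cov3].
Qed.

Lemma expl_spec_weaken {v A S F cost X} {Y : pred V} : expl_spec v A S F cost X ->
  {subset Y <= predU (pred1 v) X} -> expl_spec v A S F cost Y.
Proof.
move=> spec sYX pos vis c0 uA locA vv.
have [pF [pos' [vis' [e [sz keep fin sub cov]]]]] := spec pos vis c0 uA locA vv.
split=> //; exists pos', vis'; split=> //; split=> // x /sYX /orP[/eqP->|/cov//].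
exact: subsetP sub _ vv.
Qed.

Lemma run_cost_expl {v A S F} : cost_expl r par w q K UL UC v A S F ->
  expl_spec v A S F (expl_cost v) (anc v).
Proof.
move=> CE; apply: (cost_expl_mut_ind
  (P := fun v A S F => expl_spec v A S F (expl_cost v) (anc v))
  (P0 := fun v cs A S F => {subset cs <= children v} ->
  expl_spec v A S F (\sum_(c <- cs) branch_cost c) (fun x => has (anc^~ x) cs))) CE.
- move=> {}v {}A /andP[_ /eqP leaf].
  rewrite expl_costE leaf big_nil; apply: (expl_spec_weaken (Y := anc v) (expl_spec_stay v A)).
  by move=> x /anc_cases[->|[c]]; rewrite ?inE ?eqxx ?leaf.
- move=> {}v {}A cs {}S {}F _ pcs _ _ IHcs.
  have sub : {subset cs <= children v} by move=> c; rewrite (perm_mem pcs).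
  rewrite expl_costE -(perm_big _ pcs).
  apply: (expl_spec_weaken (Y := anc v) (IHcs sub)) => x /anc_cases[->|[c cv cx]].
    by rewrite inE /= eqxx.
  by apply/orP; right; apply/hasP; exists c; rewrite ?(perm_mem pcs).
- move=> {}v avail _; rewrite big_nil.
  exact: (expl_spec_weaken (Y := pred0) (expl_spec_stay v avail)).
- move=> {}v c cs avail B Sc Fc {}S {}F uB sB sBA _ IHc no_back _ IHcs sub.
  have cv : c \in children v by apply: sub; exact: mem_head.
  have Bn : B != [::] by rewrite -size_eq0 sB -lt0n K_gt0.
  have sub' : {subset cs <= children v} by move=> x xcs; apply: sub; rewrite inE xcs orbT.
  have nb : sends_back v c = false by exact: negbTE no_back.
  rewrite catA big_cons (_ : branch_cost c = (size B)%:R * w c + expl_cost c); last first.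
    by rewrite /branch_cost (child_costE cv) nb addr0 sB.
  apply: (expl_spec_weaken (Y := fun x => has (anc^~ x) (c :: cs))
    (expl_spec_cat uB sBA (expl_spec_descend cv Bn IHc) (IHcs sub'))).
  by move=> x xY; apply/orP; right.
- move=> {}v c cs avail B Sc Fc a {}S {}F uB sB sBA _ IHc back aF _ IHcs sub.
  have cv : c \in children v by apply: sub; exact: mem_head.
  have Bn : B != [::] by rewrite -size_eq0 sB -lt0n K_gt0.
  have sub' : {subset cs <= children v} by move=> x xcs; apply: sub; rewrite inE xcs orbT.
  have {}back : sends_back v c by [].
  rewrite big_cons (_ : branch_cost c =
      (size B)%:R * w c + expl_cost c + (depth (UL c) - depth v)); last first.
    by rewrite /branch_cost (child_costE cv) back sB; ring.
  have := expl_spec_return cv uB sBA Bn aF IHc (IHcs sub').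
  by move/expl_spec_weaken; apply=> x xY; apply/orP; right.
Qed.

Lemma sends_back_budget v : children v != [::] ->
  (\sum_(c <- children v) (K c - sends_back v c) <= K v)%N.
Proof.
move=> ne; have [u0 u0v [UCv umax _]] := UC_spec ne.
have u0_back : sends_back v u0 = false by rewrite /sends_back UCv eqxx.
have others : (\sum_(c <- children v | c != u0) (K c - sends_back v c) =
               \sum_(c <- children v | c != u0) (K c - saves_agent v c))%N.
  rewrite big_seq_cond [RHS]big_seq_cond; apply: eq_bigr => c /andP[cv cu0].
  by rewrite sends_backE // UCv; apply: contra_neq cu0 => -[].
rewrite K_label !(bigD1_seq u0) ?children_uniq //= u0_back subn0 others.
case su0: (saves_agent v u0); last by rewrite subn0 leq_maxr.
suff -> : (\sum_(c <- children v | c != u0) (K c - saves_agent v c) = 0)%N.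
  by rewrite !addn0 leq_max; move: su0 => /andP[/eqP-> _].
rewrite big_seq_cond big1 // => c /andP[cv _].
have cheap : cheap_return v c.
  rewrite (cheap_returnE cv); apply: le_trans (_ : depth (UL u0) - depth v <= _).
    by have := umax c cv; rewrite !dist_UL_child.
  by move: su0; rewrite /saves_agent (cheap_returnE u0v) => /andP[].
suff K1 : K c = 1%N by rewrite /saves_agent K1 cheap subnn.
apply/eqP; rewrite eqn_leq K_gt0 andbT leqNgt; apply/negP => /(far_UL_child cv).
by rewrite ltNge -(cheap_returnE cv) cheap.
Qed.

Definition has_expl_run (v : V) : Prop :=
  forall A, uniq A -> size A = K v ->
  exists S F, cost_expl r par w q K UL UC v A S F /\
    (v != r -> exists2 a, a \in A & (a, UL v) \in F).

Lemma sends_back_tail_gt0 {v u0 c cs} : UC v = Some u0 -> last v (c :: cs) = u0 ->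
  sends_back v c -> (0 < \sum_(x <- cs) (K x - sends_back v x))%N.
Proof.
move=> UCv lastu0 /andP[cu0 _]; have u0cs : u0 \in cs.
  have u0c : u0 != c by apply: contraNneq cu0 => <-; rewrite UCv.
  by have := mem_last c cs; rewrite -[last c cs]/(last v (c :: cs)) lastu0 inE (negbTE u0c).
apply: leq_trans (leq_sum_mem (fun x => K x - sends_back v x)%N u0cs).
by rewrite /sends_back UCv eqxx subn0 K_gt0.
Qed.

Lemma expl_children_exists {v u0} : UC v = Some u0 ->
  (forall c, c \in children v -> has_expl_run c) ->
  forall (cs : seq V) (avail : seq nat), uniq avail -> {subset cs <= children v} ->
  (cs != [::] -> last v cs = u0) ->
  (\sum_(c <- cs) (K c - sends_back v c) <= size avail)%N ->
  exists S F, expl_children r par w q K UL UC v cs avail S F /\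
    (cs != [::] -> exists2 a, a \in avail & (a, UL u0) \in F).
Proof.
move=> UCv runs; elim=> [|c cs IH] avail uA sub lastu0 budget.
  by exists [::], [seq (a, v) | a <- avail]; split=> //; constructor.
have cv : c \in children v by apply: sub; exact: mem_head.
have sub' : {subset cs <= children v} by move=> x xcs; apply: sub; rewrite inE xcs orbT.
have lastu0' : cs != [::] -> last v cs = u0.
  by case: cs {IH sub' budget sub} lastu0 => // x cs /(_ isT).
rewrite big_cons in budget.
have back_tail := sends_back_tail_gt0 UCv (lastu0 isT).
have Kc : (K c <= size avail)%N.
  case back: (sends_back v c); last by move: budget; rewrite back subn0; lia.
  have := sends_back_saves cv back; rewrite /saves_agent => /andP[/eqP-> _].
  by have := back_tail back; move: budget; lia.
set B := take (K c) avail.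
have uB : uniq B by exact: take_uniq.
have sB : size B = K c by rewrite size_takel.
have sBA : {subset B <= avail} by move=> x; exact: mem_take.
have [Sc [Fc [CEc endc]]] := runs c cv B uB sB.
have [a aB aF] := endc (child_neq_root cv).
have sz' := size_filter_notin uA uB sBA.
case back: (sends_back v c).
  have K1 : K c = 1%N by have := sends_back_saves cv back; rewrite /saves_agent => /andP[/eqP].
  set A' := rcons [seq b <- avail | b \notin B] a.
  have [||S [F [EC endu0]]] := IH A' _ sub' lastu0'.
  - by rewrite rcons_uniq filter_uniq // mem_filter aB.
  - by rewrite size_rcons sz' sB K1 subn1 prednK //; move: budget; rewrite back K1 /=; lia.
  exists ([seq Step b c | b <- B] ++ Sc ++ up_moves par #|V| a (UL c) v ++ S),
         ([seq p <- Fc | p.1 != a] ++ F); split; first exact: EC_ret uB sB sBA CEc back aF EC.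
  move=> _; have [|a' a'A a'F] := endu0.
    by apply: contraTneq (back_tail back) => ->; rewrite big_nil.
  exists a'; last by rewrite mem_cat a'F orbT.
  by move: a'A; rewrite mem_rcons inE mem_filter => /orP[/eqP->|/andP[]//]; exact: sBA.
have [|S [F [EC endu0]]] := IH [seq b <- avail | b \notin B] (filter_uniq _ uA) sub' lastu0'.
  by rewrite sz' sB leq_subRL //; move: budget; rewrite back subn0.
exists ([seq Step b c | b <- B] ++ Sc ++ S), (Fc ++ F); split.
  by apply: EC_noret uB sB sBA CEc _ EC; rewrite -/(sends_back v c) back.
move=> _; have [csn|/endu0[a' a'A a'F]] := eqVneq cs [::].
  exists a; first exact: sBA.
  by rewrite mem_cat -[u0](lastu0 isT) csn aF.
by exists a'; [move: a'A; rewrite mem_filter => /andP[] | rewrite mem_cat a'F orbT].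
Qed.

Lemma cost_expl_exists v : has_expl_run v.
Proof.
elim/tree_ind: v => v IH A uA sA; case lf: (is_leaf r par v).
  exists [::], [seq (a, v) | a <- A]; split; first exact: CE_leaf.
  move=> vr; move: lf; rewrite /is_leaf vr => /eqP chv; have [-> K1] := leaf_label chv vr.
  by move: sA; rewrite K1; case: A {uA} => [|a A] // _; exists a; rewrite ?mem_head //= inE eqxx.
have [chv|ne] := eqVneq (children v) [::].
  exists [::], [seq (a, v) | a <- A]; split=> [|vr]; last by move: lf; rewrite /is_leaf vr chv.
  by apply: (@CE_node _ _ _ _ _ _ _ _ _ v A [::]); rewrite ?lf ?chv //; [left | exact: EC_nil].
have [u0 u0v [UCv _ ULv]] := UC_spec ne.
set cs := rcons (rem u0 (children v)) u0.
have pcs : perm_eq cs (children v) by rewrite perm_rcons perm_sym perm_to_rem.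
have lcs : last v cs = u0 by rewrite last_rcons.
have sub : {subset cs <= children v} by move=> c; rewrite (perm_mem pcs).
have [|S [F [EC endu0]]] := expl_children_exists UCv IH cs A uA sub (fun _ => lcs).
  by rewrite (perm_big _ pcs) sA; exact: sends_back_budget.
exists S, F; split.
  by apply: (@CE_node _ _ _ _ _ _ _ _ _ v A cs); rewrite ?lf //; right; rewrite lcs.
by move=> _; rewrite ULv; apply: endu0; rewrite /cs; case: rem.
Qed.

End Execution.

Lemma cost_expl_strategy_exists : exists S, is_CostExpl r par w q K UL UC S.
Proof.
have [S0 [F [CE _]]] := cost_expl_exists r (iota 0 (K r)) (iota_uniq 0 (K r)) (size_iota 0 (K r)).
by exists (nseq (K r) (Invoke V) ++ S0), S0, F.
Qed.

Lemma exec_cost_expl_strategy S0 F : cost_expl r par w q K UL UC r (iota 0 (K r)) S0 F ->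
  exists pos, exec r par w q (nseq (K r) (Invoke V) ++ S0) =
              Some (pos, [set: V], (K r)%:R * q + expl_cost r).
Proof.
move=> /run_cost_expl spec.
have locA : located (nseq (K r) r) (iota 0 (K r)) r.
  by move=> a; rewrite mem_iota add0n size_nseq nth_nseq => /andP[_ ->].
have [_ [pos [vis [e [_ _ _ _ cov]]]]] :=
  spec (nseq (K r) r) (r |: set0) (0 + (K r)%:R * q) (iota_uniq 0 (K r)) locA (setU11 r set0).
have visT : vis = [set: V] by apply/setP => x; rewrite inE; apply: cov; exact: anc_root.
exists pos; rewrite -[exec _ _ _ _ _]/(run _ _) run_cat run_invokes.
by rewrite (negbTE (lt0n_neq0 (K_gt0 r))) e visT add0r.
Qed.

Lemma explored_cost_ge S pos c : exec r par w q S = Some (pos, [set: V], c) ->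
  (K r)%:R * q + expl_cost r <= c.
Proof.
move=> /explored_cost_lb[pos_gt0 lb].
have all_below : agents_below pos r = size pos.
  by rewrite /agents_below (eq_count (a2 := predT)) ?count_predT // => x; exact: anc_root.
have := @expl_cost_lb pos r; rewrite all_below => /(_ pos_gt0).
by rewrite /agent_price depth_root add0r; lra.
Qed.

End Labels.
End Moves.
End Weighted.
End Tree.

Theorem theorem2 (R : realFieldType) (V : finType) (r : V) (par : V -> V)
  (w : V -> R) (q : R)
  (Htree : is_rooted_tree r par)
  (Hw : forall v : V, v != r -> 0 < w v)
  (Hchild : forall v : V, v != r -> size (children r par v) != 1%N)
  (Hq : 0 <= q)
  (K : V -> nat) (UL : V -> V) (UC : V -> option V)
  (Hlab : is_labeling r par w q K UL UC) :
  (exists S, is_CostExpl r par w q K UL UC S) /\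
  (forall S, is_CostExpl r par w q K UL UC S ->
     explores r par w q S /\ cost_optimal r par w q S).
Proof.
split; first exact: (cost_expl_strategy_exists Htree Hw Hq Hlab).
move=> _ [S0 [F [CE ->]]].
have [pos eS] := exec_cost_expl_strategy Htree Hw Hlab CE.
have explS : explores r par w q (nseq (K r) (Invoke V) ++ S0) := ex_intro _ pos (ex_intro _ _ eS).
split=> //; split=> // S' [pos' [c eS']].
by rewrite /cost eS eS'; exact: (explored_cost_ge Htree Hw Hq Hlab eS').
Qed.
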